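(* Let $(A,\cdot,\circ)$ be a skew brace and $B$, $C$ sub-skew braces with $A = B\cdot C$. If either (a) $C$ is a trivial skew brace and a left ideal in $A$, or (b) $B$ is a trivial skew brace and a normal subgroup of $(A,\circ)$, then $B*C$ is a left ideal in $A$.
   Context: A skew brace is a set $A$ with two group operations $\cdot$ (often written by juxtaposition) and $\circ$ such that $a\circ(bc) = (a\circ b)\,a^{-1}\,(a\circ c)$ for all $a,b,c\in A$. $a^{-1}$ denotes the inverse in $(A,\cdot)$. Define $a*b = a^{-1}(a\circ b)b^{-1}$; for subsets $X,Y$, $X*Y$ is the subgroup of $(A,\cdot)$ generated by all $x*y$. A sub-skew brace is a subset that is a subgroup of both groups; it is trivial if $a\circ b=ab$ for all its elements. A subgroup $I$ of $(A,\cdot)$ is a left ideal in $A$ if $A*I\subseteq I$. $A=B\cdot C$ means every element is $bc$ with $b\in B$, $c\in C$. *)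

Set Implicit Arguments.

Definition is_group (T : Type) (op : T -> T -> T) (e : T) (inv : T -> T) : Prop :=
  (forall a b c, op a (op b c) = op (op a b) c) /\
  (forall a, op e a = a) /\ (forall a, op a e = a) /\
  (forall a, op (inv a) a = e) /\ (forall a, op a (inv a) = e).

Record SkewBrace (T : Type) := {
  mul : T -> T -> T;
  one : T;
  inv : T -> T;
  circ : T -> T -> T;
  cone : T;
  cinv : T -> T;
  mul_group : is_group mul one inv;
  circ_group : is_group circ cone cinv;
  brace_law : forall a b c,
      circ a (mul b c) = mul (mul (circ a b) (inv a)) (circ a c)
}.

Section SB.
Variables (T : Type) (A : SkewBrace T).

Definition star (a b : T) : T :=
  mul A (mul A (inv A a) (circ A a b)) (inv A b).

Definition subgroup_mul (S : T -> Prop) : Prop :=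
  S (one A) /\ (forall x y, S x -> S y -> S (mul A x y)) /\
  (forall x, S x -> S (inv A x)).

Definition subgroup_circ (S : T -> Prop) : Prop :=
  S (cone A) /\ (forall x y, S x -> S y -> S (circ A x y)) /\
  (forall x, S x -> S (cinv A x)).

Definition gen_mul (X : T -> Prop) : T -> Prop :=
  fun z => forall H, subgroup_mul H -> (forall x, X x -> H x) -> H z.

Definition star_set (X Y : T -> Prop) : T -> Prop :=
  gen_mul (fun z => exists x y, X x /\ Y y /\ z = star x y).

Definition full : T -> Prop := fun _ => True.

Definition sub_skew_brace (S : T -> Prop) : Prop :=
  subgroup_mul S /\ subgroup_circ S.

Definition trivial_sub_skew_brace (S : T -> Prop) : Prop :=
  sub_skew_brace S /\ (forall a b, S a -> S b -> circ A a b = mul A a b).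

Definition left_ideal (I : T -> Prop) : Prop :=
  subgroup_mul I /\ (forall z, star_set full I z -> I z).

Definition normal_circ (S : T -> Prop) : Prop :=
  subgroup_circ S /\
  (forall a x, S x -> S (circ A (circ A a x) (cinv A a))).

Definition factorizes (B C : T -> Prop) : Prop :=
  forall a, exists b c, B b /\ C c /\ a = mul A b c.

End SB.


(* Write λ_a(x) = a⁻¹(a∘x).  The brace law says exactly that
   every λ_a is an endomorphism of (A,·), and a ↦ λ_a turns ∘ into
   composition; moreover a*x = λ_a(x)x⁻¹.  Hence a subgroup I of (A,·) is a
   left ideal as soon as it is λ-invariant, and for I = B*C it suffices to
   check λ_a(b*c) ∈ B*C on generators, because λ_a is a homomorphism.
   For every generator  λ_a(b*c) = λ_{a∘b}(c) λ_a(c)⁻¹.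
   (a) If C is a trivial left ideal, A = B·C = B∘C; writing a = b₀∘c₀ and
       a∘b = b₁∘c₁ the triviality of C gives λ_a(b*c) = (b₁*c)(b₀*c)⁻¹.
   (b) If B is trivial and ∘-normal, a∘b = b'∘a with b' ∈ B, so
       λ_a(b*c) = b'*λ_a(c), and b'*y ∈ B*C for every y since A = B·C. *)

Section Group.
Context {T : Type} {op : T -> T -> T} {e : T} {iv : T -> T}.
Hypothesis G : is_group op e iv.

Lemma op_assoc a b c : op a (op b c) = op (op a b) c.
Proof. apply G. Qed.
Lemma op_unit_l a : op e a = a.
Proof. apply G. Qed.
Lemma op_unit_r a : op a e = a.
Proof. apply G. Qed.
Lemma op_inv_l a : op (iv a) a = e.
Proof. apply G. Qed.
Lemma op_inv_r a : op a (iv a) = e.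
Proof. apply G. Qed.

Lemma op_cancel_l a x y : op a x = op a y -> x = y.
Proof.
  intro H.
  rewrite <- (op_unit_l x), <- (op_unit_l y), <- (op_inv_l a),
    <- !op_assoc, H. reflexivity.
Qed.

Lemma inv_op x y : iv (op x y) = op (iv y) (iv x).
Proof.
  apply (op_cancel_l (op x y)). rewrite op_inv_r, <- op_assoc,
    (op_assoc y), op_inv_r, op_unit_l, op_inv_r. reflexivity.
Qed.

Lemma inv_involutive x : iv (iv x) = x.
Proof. apply (op_cancel_l (iv x)). rewrite op_inv_r, op_inv_l. reflexivity. Qed.

Lemma inv_unit : iv e = e.
Proof. rewrite <- (op_unit_r (iv e)). apply op_inv_l. Qed.

End Group.

Section SkewBraceTheory.
Variables (T : Type) (A : SkewBrace T).
Local Notation m := (mul A).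
Local Notation e := (one A).
Local Notation iv := (inv A).
Local Notation o := (circ A).

Let massoc := op_assoc (mul_group A).
Let mlid := op_unit_l (mul_group A).
Let mrid := op_unit_r (mul_group A).
Let mlinv := op_inv_l (mul_group A).
Let mrinv := op_inv_r (mul_group A).

Lemma cone_one : cone A = e.
Proof.
  pose proof (brace_law A (cone A) e e) as H.
  rewrite !(op_unit_l (circ_group A)), !mlid, !mrid in H.
  rewrite <- (inv_involutive (mul_group A) (cone A)), <- H.
  apply (inv_unit (mul_group A)).
Qed.

Definition lam (a x : T) : T := m (iv a) (o a x).

Lemma lam_mul a x y : lam a (m x y) = m (lam a x) (lam a y).
Proof. unfold lam. rewrite brace_law, !massoc. reflexivity. Qed.

Lemma lam_one a : lam a e = e.
Proof.
  apply (op_cancel_l (mul_group A) (lam a e)).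
  rewrite <- lam_mul, !mrid. reflexivity.
Qed.

Lemma lam_inv a x : lam a (iv x) = iv (lam a x).
Proof.
  apply (op_cancel_l (mul_group A) (lam a x)).
  rewrite <- lam_mul, !mrinv. apply lam_one.
Qed.

Lemma circ_lam b x : o b x = m b (lam b x).
Proof. unfold lam. rewrite massoc, mrinv, mlid. reflexivity. Qed.

Lemma lam_comp a b x : lam (o a b) x = lam a (lam b x).
Proof.
  change (m (iv (o a b)) (o (o a b) x) = m (iv a) (o a (lam b x))).
  rewrite <- (op_assoc (circ_group A)), (circ_lam b x), brace_law,
    !massoc, mlinv, mlid.
  reflexivity.
Qed.

Lemma lam_cone x : lam (cone A) x = x.
Proof.
  unfold lam. rewrite (op_unit_l (circ_group A)), cone_one,
    (inv_unit (mul_group A)), mlid. reflexivity.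
Qed.

Lemma lam_star x y : lam x y = m (star A x y) y.
Proof. unfold star. rewrite <- massoc, mlinv, mrid. reflexivity. Qed.

Lemma lam_trivial c c' : o c c' = m c c' -> lam c c' = c'.
Proof. intro H. unfold lam. rewrite H, massoc, mlinv, mlid. reflexivity. Qed.

Lemma lam_of_star a x y : lam a (star A x y) = m (lam (o a x) y) (iv (lam a y)).
Proof. unfold star. fold (lam x y). rewrite lam_mul, lam_inv, lam_comp. reflexivity. Qed.

Lemma lam_quotient x z y : m (lam x y) (iv (lam z y)) = m (star A x y) (iv (star A z y)).
Proof.
  rewrite !lam_star, (inv_op (mul_group A)), massoc,
    <- (massoc (star A x y) y), mrinv, mrid. reflexivity.
Qed.

Lemma gen_mul_subgroup X : subgroup_mul A (gen_mul A X).
Proof.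
  split; [|split].
  - intros H [H1 _] _. exact H1.
  - intros x y Hx Hy H HH HX. apply HH; [apply Hx | apply Hy]; assumption.
  - intros x Hx H HH HX. apply HH, Hx; assumption.
Qed.

Lemma gen_mul_in (X : T -> Prop) x : X x -> gen_mul A X x.
Proof. intros Hx H _ HX. exact (HX x Hx). Qed.

Lemma star_set_subgroup X Y : subgroup_mul A (star_set A X Y).
Proof. apply gen_mul_subgroup. Qed.

Lemma star_in_star_set (X Y : T -> Prop) x y : X x -> Y y -> star_set A X Y (star A x y).
Proof. intros Hx Hy. apply gen_mul_in. exists x, y. auto. Qed.

Lemma left_ideal_of_lam_invariant (I : T -> Prop) :
  subgroup_mul A I -> (forall a y, I y -> I (lam a y)) -> left_ideal A I.
Proof.
  intros HI Hlam. split; [exact HI|].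
  intros z Hz. apply (Hz I); [exact HI|].
  intros w [a [y [_ [Hy ->]]]]. unfold star. fold (lam a y).
  destruct HI as [_ [Hmul Hinv]]. auto.
Qed.

(* λ_a maps a generated subgroup into a subgroup I as soon as it maps the
   generators into I, since λ_a is a homomorphism. *)
Lemma lam_gen_mul (X I : T -> Prop) a :
  subgroup_mul A I -> (forall x, X x -> I (lam a x)) ->
  forall y, gen_mul A X y -> I (lam a y).
Proof.
  intros [I1 [I2 I3]] HX y Hy. apply (Hy (fun y => I (lam a y))); [|exact HX].
  split; [|split].
  - rewrite lam_one. exact I1.
  - intros u v Hu Hv. rewrite lam_mul. auto.
  - intros u Hu. rewrite lam_inv. auto.
Qed.

Lemma star_set_left_ideal (B C : T -> Prop) :
  (forall a b c, B b -> C c -> star_set A B C (lam a (star A b c))) ->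
  left_ideal A (star_set A B C).
Proof.
  intro Hgen. apply left_ideal_of_lam_invariant; [apply star_set_subgroup|].
  intros a y Hy. refine (lam_gen_mul _ _ a (star_set_subgroup B C) _ y Hy).
  intros z [b [c [Hb [Hc ->]]]]. auto.
Qed.

(* Case (a), step 1: if C is a left ideal and A = B·C, then A = B∘C:
   b·c = b∘λ_{b⁻¹}(c), where λ_{b⁻¹}(c) = (b⁻¹*c)c lies in C. *)
Lemma factorizes_circ (B C : T -> Prop) :
  subgroup_mul A C -> left_ideal A C -> factorizes A B C ->
  forall a, exists b c, B b /\ C c /\ a = o b c.
Proof.
  intros [_ [Cmul _]] [_ Cid] Hf a.
  destruct (Hf a) as [b [c [Hb [Hc ->]]]].
  exists b, (lam (cinv A b) c). split; [exact Hb|split].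
  - rewrite lam_star. apply Cmul; [|exact Hc].
    apply Cid, star_in_star_set; [exact I | exact Hc].
  - rewrite circ_lam, <- lam_comp, (op_inv_r (circ_group A)), lam_cone.
    reflexivity.
Qed.

Lemma lam_circ_trivial (C : T -> Prop) b c c' :
  trivial_sub_skew_brace A C -> C c -> C c' -> lam (o b c) c' = lam b c'.
Proof.
  intros [_ Ctr] Hc Hc'. rewrite lam_comp, (lam_trivial c c' (Ctr c c' Hc Hc')).
  reflexivity.
Qed.

(* Case (a): C trivial and a left ideal.  Writing a = b₀∘c₀ and a∘b = b₁∘c₁,
   λ_a(b*c) = λ_{b₁}(c) λ_{b₀}(c)⁻¹ = (b₁*c)(b₀*c)⁻¹. *)
Lemma star_set_left_ideal_case_a (B C : T -> Prop) :
  subgroup_mul A C -> factorizes A B C ->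
  trivial_sub_skew_brace A C -> left_ideal A C ->
  left_ideal A (star_set A B C).
Proof.
  intros HC Hf Ctriv Cid. apply star_set_left_ideal.
  intros a b c Hb Hc.
  destruct (factorizes_circ B C HC Cid Hf a) as [b0 [c0 [Hb0 [Hc0 Ha]]]].
  destruct (factorizes_circ B C HC Cid Hf (o a b)) as [b1 [c1 [Hb1 [Hc1 Hab]]]].
  rewrite lam_of_star, Hab, Ha, !(lam_circ_trivial C _ _ c Ctriv), lam_quotient;
    try assumption.
  destruct (star_set_subgroup B C) as [_ [Smul Sinv]].
  apply Smul; [|apply Sinv]; apply star_in_star_set; assumption.
Qed.

(* Case (b), step 1: if B is trivial and A = B·C, then b*y ∈ B*C for every
   b ∈ B and every y; indeed with y⁻¹ = b₁c₁ one gets b*y = b*c₁⁻¹. *)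
Lemma star_trivial_left_in_star_set (B C : T -> Prop) b y :
  subgroup_mul A C -> trivial_sub_skew_brace A B -> factorizes A B C ->
  B b -> star_set A B C (star A b y).
Proof.
  intros [_ [_ Cinv]] [[[_ [_ Binv]] _] Btr] Hf Hb.
  destruct (Hf (iv y)) as [b1 [c1 [Hb1 [Hc1 Hy]]]].
  assert (Hy' : y = m (iv c1) (iv b1)).
  { rewrite <- (inv_op (mul_group A)), <- Hy, (inv_involutive (mul_group A)).
    reflexivity. }
  replace (star A b y) with (star A b (iv c1)).
  - apply star_in_star_set; auto.
  - unfold star. fold (lam b (iv c1)). fold (lam b y).
    rewrite Hy', lam_mul, (lam_trivial b (iv b1)) by auto.
    rewrite (inv_op (mul_group A)), !(inv_involutive (mul_group A)),
      <- !massoc, (massoc (iv b1)), mlinv, mlid.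
    reflexivity.
Qed.

(* Case (b): B trivial and ∘-normal.  With b' = a∘b∘a⁻¹ ∈ B,
   λ_a(b*c) = λ_{b'}(λ_a c) λ_a(c)⁻¹ = b'*λ_a(c). *)
Lemma star_set_left_ideal_case_b (B C : T -> Prop) :
  subgroup_mul A C -> factorizes A B C ->
  trivial_sub_skew_brace A B -> normal_circ A B ->
  left_ideal A (star_set A B C).
Proof.
  intros HC Hf Btriv [_ Bnormal]. apply star_set_left_ideal.
  intros a b c Hb _.
  set (b' := o (o a b) (cinv A a)).
  assert (Hab : o a b = o b' a).
  { unfold b'. rewrite <- (op_assoc (circ_group A)),
      (op_inv_l (circ_group A)), (op_unit_r (circ_group A)). reflexivity. }
  rewrite lam_of_star, Hab, lam_comp.
  apply (star_trivial_left_in_star_set B C b' (lam a c) HC Btriv Hf).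
  apply Bnormal, Hb.
Qed.

End SkewBraceTheory.

Theorem proposition3p2 (T : Type) (A : SkewBrace T) (B C : T -> Prop) :
  sub_skew_brace A B -> sub_skew_brace A C -> factorizes A B C ->
  ((trivial_sub_skew_brace A C /\ left_ideal A C) \/
   (trivial_sub_skew_brace A B /\ normal_circ A B)) ->
  left_ideal A (star_set A B C).
Proof.
  intros _ [HC _] Hf [[Ctriv Cid] | [Btriv Bnormal]].
  - exact (star_set_left_ideal_case_a T A B C HC Hf Ctriv Cid).
  - exact (star_set_left_ideal_case_b T A B C HC Hf Btriv Bnormal).
Qed.
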